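(* For every finite ordered graph $(G,<)$, the order $\prec_B$ is a breadth-first traversal of $G$.
   Context: A finite ordered graph $(G,<)$ is a finite undirected graph with a linear order on its vertices. The canonical breadth-first order $\prec_B$: for vertices $v,w$ let $v_0,w_0$ be the $<$-least vertices of the connected components of $v$ and $w$. Let $<^\star$ be the order on finite sequences of vertices comparing first by length and then lexicographically with respect to $<$. Let $\vec v$ be the $<^\star$-least path from $v_0$ to $v$ (similarly $\vec w$). Then: if $v_0\neq w_0$, $v\prec_B w$ iff $v_0<w_0$; if $v_0=w_0$, $v\prec_B w$ iff $\vec v<^\star\vec w$. A linear order $\prec$ of the vertex set, listing vertices $v_1\prec\dots\prec v_n$, is a breadth-first traversal if for each $i\ge2$, whenever some $v_j$ with $j<i$ has a neighbour outside $\{v_1,\dots,v_{i-1}\}$, $v_i$ is adjacent to $v_{j^*}$ for the least such $j^*$ (i.e. a visiting order of breadth-first search). Equivalently: for all $u\prec v\prec w$ with $u,w$ adjacent, $v$ has a neighbour $x$ with $x\prec v$ and $x\preceq u$. *)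

From mathcomp Require Import all_boot all_order.
Set Implicit Arguments. Unset Strict Implicit. Unset Printing Implicit Defensive.
Import Order.TTheory.
Local Open Scope order_scope.

(* A finite ordered graph: vertex type T : finOrderType d (a finite type with a
   linear order <), adjacency e : rel T assumed symmetric (undirected). *)

Section Defs.
Context {d : Order.disp_t} {T : finOrderType d}.

Fixpoint lexlt (s t : seq T) : bool :=
  match s, t with
  | [::], [::] => false
  | [::], _ :: _ => true
  | _ :: _, [::] => false
  | x :: s', y :: t' => (x < y) || ((x == y) && lexlt s' t')
  end.

Definition ltstar (s t : seq T) : bool :=
  (size s < size t)%N || ((size s == size t) && lexlt s t).

Definition is_walk (e : rel T) (a b : T) (p : seq T) : bool :=
  match p with
  | [::] => false
  | x :: q => [&& x == a, path e x q & last x q == b]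
  end.

Definition least_walk (e : rel T) (a b : T) (p : seq T) : Prop :=
  is_walk e a b p /\ forall q, is_walk e a b q -> q != p -> ltstar p q.

Definition comp_root (e : rel T) (v r : T) : Prop :=
  connect e r v /\ forall w, connect e w v -> r <= w.

Definition precB (e : rel T) (v w : T) : Prop :=
  exists v0 w0, [/\ comp_root e v v0, comp_root e w w0 &
    (v0 <> w0 /\ v0 < w0) \/
    (v0 = w0 /\ exists p q, [/\ least_walk e v0 v p, least_walk e w0 w q & ltstar p q])].

(* lt is a (strict) linear order on T that is a breadth-first traversal:
   whenever some vertex u before v has a neighbour not before v, v is adjacent
   to the lt-least such u. *)
Definition has_outside_nb (e : rel T) (lt : T -> T -> Prop) (v u : T) : Prop :=
  exists x, e u x /\ ~ lt x v.

Definition bf_traversal (e : rel T) (lt : T -> T -> Prop) : Prop :=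
  [/\ (forall v, ~ lt v v),
      (forall u v w, lt u v -> lt v w -> lt u w),
      (forall u v, u <> v -> lt u v \/ lt v u) &
      forall v u, lt u v -> has_outside_nb e lt v u ->
        exists2 us, lt us v /\ has_outside_nb e lt v us &
          (forall u', lt u' v -> has_outside_nb e lt v u' -> us = u' \/ lt us u')
          /\ e us v].

End Defs.

(* A prefix of a least walk is a least walk, so
   every non-root vertex v has a parent y, adjacent to v, whose least walk
   extended by v is that of v.  If u < v < w with u, w adjacent, then the least
   walk to u extended by w is some walk to w, hence
     walk(y) ++ [v] = walk(v) <* walk(w) <=* walk(u) ++ [w],
   and comparing these extensions of equal length gives y <= u.  This
   four-point property yields a breadth-first traversal: let us be the least
   vertex before v with a neighbour x not before v; if x <> v then v < x, and
   the parent z <= us of v has the neighbour v not before v, so z = us. *)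

From mathcomp Require Import all_boot all_order.
From Stdlib Require Import FunctionalExtensionality PropExtensionality.
Set Implicit Arguments. Unset Strict Implicit. Unset Printing Implicit Defensive.
Import Order.TTheory.
Local Open Scope order_scope.

Lemma exists_minimal (I : finType) (lt : rel I) (P : pred I) :
  irreflexive lt -> transitive lt -> (exists x, P x) ->
  exists x, P x /\ forall y, P y -> ~~ lt y x.
Proof.
move=> irr_lt trans_lt [x0 Px0].
pose below x := #|[pred y | lt y x && P y]|.
have [x Px below_min] := arg_minnP below Px0.
exists x; split => // y Py; apply/negP => lt_yx.
have := below_min y Py; rewrite leqNgt => /negP; apply.
apply: proper_card; apply/properP; split.
  apply/subsetP => z; rewrite !inE => /andP[lt_zy ->].
  by rewrite (trans_lt _ _ _ lt_zy lt_yx).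
by exists y; rewrite !inE ?lt_yx ?Py ?irr_lt.
Qed.

Section ShortLex.
Context {d : Order.disp_t} {T : finOrderType d}.
Implicit Types (s t u : seq T).

Lemma lexlt_irr s : ~~ lexlt s s.
Proof. by elim: s => //= x s IH; rewrite ltxx eqxx /= (negbTE IH). Qed.

Lemma lexlt_trans s t u : lexlt s t -> lexlt t u -> lexlt s u.
Proof.
elim: s t u => [|x s IH] [|y t] [|z u] //=.
case/orP=> [xy|/andP[/eqP-> st]]; case/orP=> [yz|/andP[/eqP<- tu]].
- by rewrite (lt_trans xy yz).
- by rewrite xy.
- by rewrite yz.
- by rewrite eqxx (IH _ _ st tu) orbT.
Qed.

Lemma lexlt_total s t : s != t -> lexlt s t || lexlt t s.
Proof.
elim: s t => [|x s IH] [|y t] //= neq.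
case: (ltgtP x y) => //= xy; subst y.
by apply: IH; apply: contraNneq neq => ->.
Qed.

Lemma lexlt_rcons2 s t a b : size s = size t ->
  lexlt (rcons s a) (rcons t b) -> s = t \/ lexlt s t.
Proof.
elim: s t => [|x s IH] [|y t] //=; first by left.
move=> [/IH {}IH] /orP[->|/andP[/eqP-> /IH[->|->]]]; [right | left | right] => //.
by rewrite eqxx orbT.
Qed.

Lemma ltstar_irr s : ~~ ltstar s s.
Proof. by rewrite /ltstar ltnn eqxx /= lexlt_irr. Qed.

Lemma ltstar_trans s t u : ltstar s t -> ltstar t u -> ltstar s u.
Proof.
rewrite /ltstar => /orP[st|/andP[/eqP st lst]] /orP[tu|/andP[/eqP tu ltu]].
- by rewrite (ltn_trans st tu).
- by rewrite -tu st.
- by rewrite st tu.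
- by rewrite st tu eqxx (lexlt_trans lst ltu) orbT.
Qed.

Lemma ltstar_total s t : s != t -> ltstar s t || ltstar t s.
Proof.
by move=> neq; rewrite /ltstar; case: (ltngtP (size s) (size t)) => //= _; apply: lexlt_total.
Qed.

Lemma ltstar_rcons s a : ltstar s (rcons s a).
Proof. by rewrite /ltstar size_rcons ltnSn. Qed.

Lemma ltstar_rcons2 s t a b :
  ltstar (rcons s a) (rcons t b) -> s = t \/ ltstar s t.
Proof.
rewrite /ltstar !size_rcons ltnS eqSS => /orP[->|/andP[/eqP st lst]]; first by right.
by case: (lexlt_rcons2 st lst) => [|->]; [left | right; rewrite st eqxx orbT].
Qed.

End ShortLex.

Section LeastWalks.
Context {d : Order.disp_t} {T : finOrderType d} (e : rel T).
Implicit Types (p q : seq T) (a b c : T).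

Lemma walk_rcons a b c p : is_walk e a b p -> e b c -> is_walk e a c (rcons p c).
Proof.
case: p => [|x p] //= /and3P[xa ep /eqP lastp] ebc.
by rewrite xa rcons_path ep lastp ebc last_rcons eqxx.
Qed.

Lemma walk_ltstar1 a b p : is_walk e a b p -> ~~ ltstar p [:: a].
Proof. by case: p => [|x [|y p]] //= /andP[/eqP-> _]; rewrite /ltstar /= ltxx eqxx. Qed.

Lemma least_walk1 a : least_walk e a a [:: a].
Proof.
split=> [|q wq neq]; first by rewrite /= !eqxx.
by case/orP: (ltstar_total neq) => //; rewrite (negbTE (walk_ltstar1 wq)).
Qed.

Lemma least_walk_uniq a b p q : least_walk e a b p -> least_walk e a b q -> p = q.
Proof.
move=> [wp least_p] [wq least_q]; case: (eqVneq p q) => // neq.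
have neq' : q != p by rewrite eq_sym.
have := ltstar_trans (least_q _ wp neq) (least_p _ wq neq').
by rewrite (negbTE (ltstar_irr _)).
Qed.

Lemma least_walk_last a b p : least_walk e a b p -> last a p = b.
Proof. by case: p => [[]|x p] // [/= /and3P[/eqP-> _ /eqP]]. Qed.

Lemma least_walk_belast a c p : p != [::] -> least_walk e a c (rcons p c) ->
  least_walk e a (last a p) p /\ e (last a p) c.
Proof.
case: p => [|x p] // _ [/= /and3P[/eqP-> + _] least].
rewrite rcons_path => /andP[ep elc].
split=> //; split=> [|q wq neq]; first by rewrite /= eqxx ep eqxx.
have neq' : rcons q c != rcons (a :: p) c by apply: contra neq => /eqP /rcons_inj [->].
have := least _ (walk_rcons wq elc) neq'; rewrite -rcons_cons => /ltstar_rcons2[] //.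
by move=> eq_q; rewrite eq_q eqxx in neq.
Qed.

Lemma least_walk_exists a b : connect e a b -> exists p, least_walk e a b p.
Proof.
move=> /connectP [p0 ep0 lastp0].
pose walk_of_size n := [exists t : n.-tuple T, is_walk e a b t].
have : exists n, walk_of_size n.
  exists (size (a :: p0)); apply/existsP; exists (in_tuple (a :: p0)).
  by rewrite /= eqxx ep0 lastp0 eqxx.
case/ex_minnP=> n /existsP[t0 wt0] size_min.
have lexlt_irreflexive : irreflexive (fun s t : n.-tuple T => lexlt s t).
  by move=> s; apply/negbTE/lexlt_irr.
have lexlt_transitive : transitive (fun s t : n.-tuple T => lexlt s t).
  by move=> s1 s2 s3; apply: lexlt_trans.
have [t [wt t_min]] := exists_minimal (P := fun t : n.-tuple T => is_walk e a b t)
  lexlt_irreflexive lexlt_transitive (ex_intro _ t0 wt0).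
exists t; split => // q wq neq.
have /size_min : walk_of_size (size q) by apply/existsP; exists (in_tuple q).
rewrite leq_eqVlt => /orP[/eqP size_q|]; last by rewrite /ltstar size_tuple => ->.
have sq : size q == n by rewrite size_q.
have := ltstar_total neq; rewrite /ltstar size_tuple (eqP sq) ltnn eqxx /=.
by rewrite (negbTE (t_min (Tuple sq) wq)).
Qed.

End LeastWalks.

Section ComponentRoots.
Context {d : Order.disp_t} {T : finOrderType d} (e : rel T).

Lemma comp_root_exists v : exists r, comp_root e v r.
Proof.
have [r crv r_min] := arg_minP (P := connect e ^~ v) id (connect0 e v).
by exists r; split => // w /r_min.
Qed.

Lemma comp_root_uniq v r1 r2 : comp_root e v r1 -> comp_root e v r2 -> r1 = r2.
Proof. by move=> [c1 min1] [c2 min2]; apply: le_anti; rewrite min1 // min2. Qed.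

Lemma comp_root_edge u w r : symmetric e -> e u w -> comp_root e u r -> comp_root e w r.
Proof.
move=> e_sym euw [cru r_min].
split=> [|x cxw]; first exact: connect_trans cru (connect1 euw).
by apply: r_min; apply: connect_trans cxw (connect1 _); rewrite e_sym.
Qed.

End ComponentRoots.

Section BreadthFirst.
Context {d : Order.disp_t} {T : finOrderType d} (e : rel T).

Lemma bf_traversal_of_parent (lt : rel T) :
  irreflexive lt -> transitive lt -> (forall u v, u != v -> lt u v || lt v u) ->
  (forall u v w, lt u v -> lt v w -> e u w ->
     exists2 y, e y v & lt y v /\ (y = u \/ lt y u)) ->
  bf_traversal e lt.
Proof.
move=> irr_lt trans_lt lt_total parent.
have lt_neg u v : u != v -> ~~ lt u v -> lt v u.
  by move=> /lt_total; case: (lt u v).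
split=> [v|u v w|u v /eqP /lt_total /orP //|v u lt_uv [x [eux lt_xv]]].
- by rewrite irr_lt.
- exact: trans_lt.
pose active z := lt z v && [exists y, e z y && ~~ lt y v].
have active_outside z : lt z v -> has_outside_nb e lt v z -> active z.
  move=> lt_zv [y [ezy /negP lt_yv]].
  by rewrite /active lt_zv; apply/existsP; exists y; rewrite ezy.
have [|us [act_us us_min]] := exists_minimal (P := active) irr_lt trans_lt.
  by exists u; apply: active_outside => //; exists x.
case/andP: act_us => lt_usv /existsP[y /andP[e_usy lt_yv]].
have us_le z : active z -> us = z \/ lt us z.
  move=> act_z; case: (eqVneq us z) => [|neq]; [by left | right].
  by apply: lt_neg; [rewrite eq_sym | apply: us_min].
exists us; first by split => //; exists y; split => //; apply/negP.
split=> [u' lt_u'v /(active_outside _ lt_u'v)|]; first exact: us_le.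
case: (eqVneq y v) => [<- //|neq_yv].
have [z ezv [lt_zv z_le]] := parent _ _ _ lt_usv (lt_neg _ _ neq_yv lt_yv) e_usy.
have z_out : has_outside_nb e lt v z by exists v; rewrite irr_lt.
have [-> //|lt_usz] := us_le z (active_outside _ lt_zv z_out).
case: z_le lt_usz => [->|lt_zus lt_usz]; first by rewrite irr_lt.
by have := trans_lt _ _ _ lt_zus lt_usz; rewrite irr_lt.
Qed.

End BreadthFirst.

Section CanonicalOrder.
Context {d : Order.disp_t} {T : finOrderType d} (e : rel T).
Hypothesis e_sym : symmetric e.
Variables (rt : T -> T) (pw : T -> seq T).
Hypothesis rtP : forall v, comp_root e v (rt v).
Hypothesis pwP : forall v, least_walk e (rt v) v (pw v).

Definition bfs_lt v w := (rt v < rt w) || ((rt v == rt w) && ltstar (pw v) (pw w)).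

Lemma precBE v w : precB e v w <-> bfs_lt v w.
Proof.
rewrite /bfs_lt; split=> [[v0 [w0 [rv rw]]]|].
  move: (comp_root_uniq rv (rtP v)) (comp_root_uniq rw (rtP w)) => -> ->.
  case=> [[_ ->] //|[eq_r [p [q [lp lq lt_pq]]]]].
  rewrite eq_r in lp *; rewrite eqxx (least_walk_uniq (pwP w) lq).
  by have := pwP v; rewrite eq_r => /least_walk_uniq/(_ lp) ->; rewrite lt_pq orbT.
case/orP=> [lt_r|/andP[/eqP eq_r lt_p]]; exists (rt v), (rt w); split=> //; [left | right].
  by split=> //; apply/eqP; rewrite lt_eqF.
by split=> //; exists (pw v), (pw w); split.
Qed.

Lemma rt_edge u w : e u w -> rt u = rt w.
Proof. by move=> euw; apply: comp_root_uniq (comp_root_edge e_sym euw (rtP u)) (rtP w). Qed.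

Lemma pw_inj v w : rt v = rt w -> pw v = pw w -> v = w.
Proof.
move=> eq_r eq_p; rewrite -(least_walk_last (pwP v)) -(least_walk_last (pwP w)).
by rewrite eq_r eq_p.
Qed.

Lemma bfs_lt_irr v : ~~ bfs_lt v v.
Proof. by rewrite /bfs_lt ltxx eqxx /= ltstar_irr. Qed.

Lemma bfs_lt_trans u v w : bfs_lt u v -> bfs_lt v w -> bfs_lt u w.
Proof.
rewrite /bfs_lt => /orP[lt1|/andP[/eqP eq1 lt1]] /orP[lt2|/andP[/eqP eq2 lt2]].
- by rewrite (lt_trans lt1 lt2).
- by rewrite -eq2 lt1.
- by rewrite eq1 lt2.
- by rewrite eq1 eq2 eqxx (ltstar_trans lt1 lt2) orbT.
Qed.

Lemma bfs_lt_total u v : u != v -> bfs_lt u v || bfs_lt v u.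
Proof.
move=> neq; rewrite /bfs_lt; case: (ltgtP (rt u) (rt v)) => //= eq_r.
by apply: ltstar_total; apply: contra neq => /eqP /(pw_inj eq_r) ->.
Qed.

Lemma bfs_lt_rt v w : bfs_lt v w -> rt v <= rt w.
Proof. by case/orP=> [/ltW|/andP[/eqP->]]. Qed.

Lemma pw_root v : v = rt v -> pw v = [:: v].
Proof.
by move=> v_root; apply: least_walk_uniq (pwP v) _; rewrite -v_root; apply: least_walk1.
Qed.

Lemma pw_parent v : v != rt v ->
  exists2 y, e y v & rt y = rt v /\ pw v = rcons (pw y) v.
Proof.
move=> v_nonroot; have least_v := pwP v.
have [p eq_pv] : exists p, pw v = rcons p v.
  case/lastP: (pw v) least_v => [[]//|p x] least_v.
  by exists p; rewrite -(least_walk_last least_v) last_rcons.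
have p_nil : p != [::].
  apply: contra v_nonroot => /eqP p_nil.
  by move: least_v; rewrite eq_pv p_nil => -[/and3P[]].
rewrite eq_pv in least_v; have [least_p ey] := least_walk_belast p_nil least_v.
set y := last (rt v) p in least_p ey *; have ry : rt y = rt v := rt_edge ey.
exists y => //; split=> //.
by rewrite eq_pv (least_walk_uniq (pwP y) (q := p)) // ry.
Qed.

Lemma bfs_lt_parent u v w : bfs_lt u v -> bfs_lt v w -> e u w ->
  exists2 y, e y v & bfs_lt y v /\ (y = u \/ bfs_lt y u).
Proof.
move=> lt_uv lt_vw euw; have ruw := rt_edge euw.
have rvu : rt v = rt u.
  by apply: le_anti; rewrite (bfs_lt_rt lt_uv) ruw (bfs_lt_rt lt_vw).
move: lt_uv lt_vw; rewrite /bfs_lt rvu -ruw ltxx eqxx /= => lt_uv lt_vw.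
have v_nonroot : v != rt v.
  apply/eqP=> v_root; move: lt_uv; rewrite (pw_root v_root) {1}v_root rvu.
  by case: (pwP u) => /walk_ltstar1 /negbTE ->.
have [y eyv [ryv pv]] := pw_parent v_nonroot.
exists y => //; split; first by rewrite /bfs_lt ryv rvu eqxx pv ltstar_rcons orbT.
have walk_uw : is_walk e (rt w) w (rcons (pw u) w).
  by rewrite -ruw; apply: walk_rcons euw; case: (pwP u).
have : ltstar (rcons (pw y) v) (rcons (pw u) w).
  rewrite -pv; case: (eqVneq (rcons (pw u) w) (pw w)) => [-> //|neq].
  by apply: ltstar_trans lt_vw _; case: (pwP w) => _; apply.
case/ltstar_rcons2 => [eq_p|lt_yu]; first by left; apply: pw_inj eq_p; rewrite ryv.
by right; rewrite /bfs_lt ryv rvu eqxx lt_yu orbT.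
Qed.

End CanonicalOrder.

Theorem lemma5 (d : Order.disp_t) (T : finOrderType d) (e : rel T) :
  symmetric e -> bf_traversal e (precB e).
Proof.
move=> e_sym.
have [rt rtP] := fin_all_exists (comp_root_exists e).
have [pw pwP] := fin_all_exists (fun v => least_walk_exists (rtP v).1).
have -> : precB e = fun v w => bfs_lt rt pw v w.
  do 2![apply: functional_extensionality => ?].
  by apply: propositional_extensionality; apply: precBE.
apply: bf_traversal_of_parent.
- by move=> v; apply/negbTE/bfs_lt_irr.
- by move=> u v w; apply: bfs_lt_trans.
- exact: bfs_lt_total pwP.
- exact: (bfs_lt_parent e_sym rtP pwP).
Qed.
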